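(* The function $R:\Sigma^n\to\Sigma^n$ is bijective.
   Context: Let $k\ge 2$, $\Sigma=\{0,\dots,k-1\}$ with arithmetic modulo $k$, $n\ge 1$, and $s=s[0]\cdots s[n-1]\in\Sigma^n$. For an integer $j$, $ICR_j(s)=s[1]\cdots s[n-1](s[0]+j)$; each $ICR_j$ is a bijection of $\Sigma^n$. Let $\mathbf N$ be the set of cycles (orbits) of the permutation $ICR_1$ of $\Sigma^n$; $orbit(s)$ is the cycle containing $s$. Let $\mathbf G$ be the directed graph on $\mathbf N$ with an arc $(\mathcal U,\mathcal V)$ iff some $s\in\mathcal U$ has $ICR_0(s)\in\mathcal V$. Let $\mathbf T$ be a directed spanning tree of $\mathbf G$ rooted at $\mathcal R\in\mathbf N$ (arcs from parent to child), with parent map $parent$ on $\mathbf N\setminus\{\mathcal R\}$; the depth of a cycle is its distance from the root (root has depth $0$). For each $\mathcal U\ne\mathcal R$, a representative $rep(\mathcal U)$ is a fixed node $s\in\mathcal U$ with $ICR_0^{-1}(s)\in parent(\mathcal U)$ and $s[n-1]\equiv \text{depth}(\mathcal U)\pmod k$ (such a node is assumed to exist and one is fixed). $\mathrm{Reps}$ is the set of all representatives. Define $R(s)=ICR_0(s)$ if $ICR_0(s)\in\mathrm{Reps}$; $R(s)=ICR_2(s)$ if $ICR_1(s)\in\mathrm{Reps}$; $R(s)=ICR_1(s)$ otherwise (these cases do not conflict). *)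

From mathcomp Require Import all_boot all_algebra.
Set Implicit Arguments. Unset Strict Implicit. Unset Printing Implicit Defensive.
Import GRing.Theory.
Local Open Scope ring_scope.

(* Strings of length n over Sigma = Z/kZ (k >= 2 assumed in the theorem). *)
Definition word (n k : nat) := (n.-tuple 'Z_k)%type.

(* ICR_j(s) = s[1] ... s[n-1] (s[0] + j)  (for n >= 1). *)
Definition icr (n k : nat) (j : nat) (s : word n k) : word n k :=
  [tuple nth 0 (rcons (behead s) (head 0 s + j%:R)) i | i < n].

Definition orbit_icr (n k : nat) (s : word n k) : {set word n k} :=
  [set t | fconnect (@icr n k 1) s t].

Definition is_cycle (n k : nat) (U : {set word n k}) : bool :=
  [exists s, U == orbit_icr s].

Definition arcG (n k : nat) (U V : {set word n k}) : bool :=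
  [exists s, (s \in U) && (icr 0 s \in V)].

Definition Reps (n k : nat) (Root : {set word n k})
  (rep : {set word n k} -> word n k) : {set word n k} :=
  [set rep U | U in [set U : {set word n k} | is_cycle U && (U != Root)]].

Definition Rsucc (n k : nat) (Root : {set word n k})
  (rep : {set word n k} -> word n k) (s : word n k) : word n k :=
  if icr 0 s \in Reps Root rep then icr 0 s
  else if icr 1 s \in Reps Root rep then icr 2 s
  else icr 1 s.

(* R s = ICR_c(s) s for a step c(s) in {0, 1, 2}, and each ICR_c is injective, so it suffices to
   read c(s) off the value R s.  The value lies in Reps exactly when c(s) = 0: if c(s) = 2 and
   ICR_2(s) were a representative too, then ICR_1(s) and ICR_2(s) would represent a cycle and its
   parent, whose last digits must differ by -1 (depths) and by +1 (construction), so 2 = 0 in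
   Sigma and ICR_2(s) = ICR_0(s), which is not a representative.  Steps 1 and 2 are told apart by
   whether R s with its last digit decreased by one is a representative. *)
From mathcomp Require Import ring.
From mathcomp Require Import all_boot all_algebra.
Set Implicit Arguments. Unset Strict Implicit. Unset Printing Implicit Defensive.
Import GRing.Theory.
Local Open Scope ring_scope.

Section Rotation.
Variables (n k : nat).
Hypothesis n_gt0 : (0 < n)%N.
Implicit Types (s t : word n k) (U V : {set word n k}).

Lemma icr_val j s : val (icr j s) = rcons (behead s) (head 0 s + j%:R).
Proof.
apply: (@eq_from_nth _ 0) => [|i].
  by rewrite size_tuple size_rcons size_behead size_tuple prednK.
rewrite size_tuple => lt_i_n.
by rewrite (nth_map (Ordinal lt_i_n)) ?size_enum_ord // nth_enum_ord.
Qed.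

Lemma icr_last j s : last 0 (icr j s : seq _) = head 0 s + j%:R.
Proof. by rewrite icr_val last_rcons. Qed.

Lemma eq_icr i j s t :
  (icr i s == icr j t) = (behead s == behead t) && (head 0 s + i%:R == head 0 t + j%:R).
Proof.
apply/eqP/andP => [/(congr1 val)|[/eqP eq_tl /eqP eq_hd]].
  rewrite !icr_val => /rcons_inj eq_pair.
  by move: (congr1 fst eq_pair) (congr1 snd eq_pair) => /= -> ->; rewrite !eqxx.
by apply: val_inj; rewrite !icr_val eq_tl eq_hd.
Qed.

Lemma word_head_behead_inj s t : head 0 s = head 0 t -> behead s = behead t -> s = t.
Proof.
case: s => [[|a s'] size_s]; first by exfalso; move: n_gt0; rewrite -(eqP size_s).
case: t => [[|b t'] size_t]; first by exfalso; move: n_gt0; rewrite -(eqP size_t).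
by move=> /= eq_hd eq_tl; apply: val_inj; rewrite /= eq_hd eq_tl.
Qed.

Lemma icr_inj j : injective (@icr n k j).
Proof.
move=> s t /eqP; rewrite eq_icr => /andP [/eqP eq_tl /eqP /addIr eq_hd].
exact: word_head_behead_inj.
Qed.

Lemma icr_shift i j i' j' s t :
  icr i s = icr j t -> i'%:R - j'%:R = i%:R - j%:R :> 'Z_k -> icr i' s = icr j' t.
Proof.
move/eqP; rewrite eq_icr => /andP [eq_tl /eqP eq_hd] eq_diff.
apply/eqP; rewrite eq_icr eq_tl; apply/eqP/eqP; rewrite -subr_eq0.
have -> : head 0 s + i'%:R - (head 0 t + j'%:R) =
          head 0 s + i%:R - (head 0 t + j%:R) + (i'%:R - j'%:R - (i%:R - j%:R)) by ring.
by rewrite eq_hd eq_diff !subrr addr0.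
Qed.

Lemma mem_cycle_icr1 U s : is_cycle U -> s \in U -> icr 1 s \in U.
Proof.
case/existsP=> u /eqP ->; rewrite !inE => /connect_trans; apply.
exact: fconnect1.
Qed.

Lemma cycle_eq U V s : is_cycle U -> is_cycle V -> s \in U -> s \in V -> U = V.
Proof.
case/existsP=> u /eqP -> /existsP [v /eqP ->]; rewrite !inE => us vs.
have sym := fconnect_sym (@icr_inj 1).
apply/setP => t; rewrite !inE; apply: (same_connect sym).
by apply: connect_trans us _; rewrite sym.
Qed.

End Rotation.

Section Successor.
Variables (k n : nat) (Root : {set word n k}) (par : {set word n k} -> {set word n k}).
Variables (depth : {set word n k} -> nat) (rep : {set word n k} -> word n k).
Hypothesis n_gt0 : (0 < n)%N.
Hypothesis par_cycle : forall U, is_cycle U -> U != Root -> is_cycle (par U).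
Hypothesis depth_par : forall U, is_cycle U -> U != Root -> depth U = (depth (par U)).+1.
Hypothesis rep_spec : forall U, is_cycle U -> U != Root ->
  [/\ rep U \in U, exists2 t, t \in par U & icr 0 t = rep U
    & last 0 (rep U : seq 'Z_k) = (depth U)%:R].
Implicit Types (s t : word n k).

Local Notation reps := (Reps Root rep).

Lemma mem_reps s :
  s \in reps -> exists2 U, is_cycle U /\ U != Root & s = rep U.
Proof. by case/imsetP=> U; rewrite inE => /andP [cU nU] ->; exists U. Qed.

Lemma reps_icr_succ_char2 i s :
  icr i s \in reps -> icr i.+1 s \in reps -> 2%:R = 0 :> 'Z_k.
Proof.
move=> /mem_reps [U [cU nU] eU] /mem_reps [V [cV nV] eV].
have cP := par_cycle cU nU.
have [_ [t tP et] lastU] := rep_spec cU nU.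
have [rV _ lastV] := rep_spec cV nV.
have et1 : icr 1 t = icr i.+1 s.
  have et0 : icr 0 t = icr i s by rewrite et eU.
  by apply: (icr_shift n_gt0 et0); rewrite -natr1; ring.
have V_par : V = par U.
  by apply: (cycle_eq n_gt0 cV cP rV); rewrite -eV -et1 (mem_cycle_icr1 cP).
move: lastU lastV; rewrite (depth_par cU nU) -V_par -eU -eV !icr_last // -!natr1.
move=> lastU lastV.
have -> : 0 + 1 + 1 = head 0 s + (i%:R + 1) - (depth V)%:R
                    - (head 0 s + i%:R - ((depth V)%:R + 1)) :> 'Z_k by ring.
by rewrite lastU lastV !subrr.
Qed.

Definition Rstep s : nat :=
  if icr 0 s \in reps then 0 else if icr 1 s \in reps then 2 else 1.

Lemma RsuccE s : Rsucc Root rep s = icr (Rstep s) s.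
Proof. by rewrite /Rsucc /Rstep; case: ifP => //; case: ifP. Qed.

Variant Rstep_spec s : nat -> Prop :=
  | RstepRep of icr 0 s \in reps : Rstep_spec s 0
  | RstepSkip of icr 0 s \notin reps & icr 1 s \in reps : Rstep_spec s 2
  | RstepPlain of icr 0 s \notin reps & icr 1 s \notin reps : Rstep_spec s 1.

Lemma RstepP s : Rstep_spec s (Rstep s).
Proof.
rewrite /Rstep; case: ifPn => [|r0]; first exact: RstepRep.
by case: ifPn => r1; [apply: RstepSkip | apply: RstepPlain].
Qed.

Lemma Rsucc_reps s : (Rsucc Root rep s \in reps) = (Rstep s == 0%N).
Proof.
rewrite RsuccE; case: RstepP => [//|r0 r1|_ r1]; apply/negbTE => //.
apply: contra r0 => r2.
have two0 := reps_icr_succ_char2 r1 r2.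
suff -> : icr 0 s = icr 2 s by [].
by apply: (icr_shift n_gt0 (erefl (icr 2 s))); rewrite two0 !subr0.
Qed.

Lemma Rstep_Rsucc s t : Rsucc Root rep s = Rsucc Root rep t -> Rstep s = Rstep t.
Proof.
wlog le_st : s t / (Rstep s <= Rstep t)%N.
  by move=> wlog_st e; case: (leqP (Rstep s) (Rstep t)) => [|/ltnW] /wlog_st ->.
move=> e; have := Rsucc_reps s; rewrite e Rsucc_reps.
move: e le_st; rewrite !RsuccE.
case: RstepP => [_|_ _|s0 _]; case: RstepP => // _ t1 e _ _.
have e01 : icr 0 s = icr 1 t by apply: (icr_shift n_gt0 e); ring.
by move: s0; rewrite e01 t1.
Qed.

End Successor.

Theorem lemma10 (k n : nat) (hk : (1 < k)%N) (hn : (0 < n)%N)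
  (Root : {set word n k}) (par : {set word n k} -> {set word n k})
  (depth : {set word n k} -> nat) (rep : {set word n k} -> word n k)
  (hRoot : is_cycle Root)
  (hpar : forall U, is_cycle U -> U != Root ->
            is_cycle (par U) /\ arcG (par U) U)
  (hdepth0 : depth Root = 0%N)
  (hdepthS : forall U, is_cycle U -> U != Root ->
            depth U = (depth (par U)).+1)
  (hrep : forall U, is_cycle U -> U != Root ->
            [/\ rep U \in U,
                exists2 t, t \in par U & icr 0 t = rep U
              & last 0 (rep U : seq 'Z_k) = (depth U)%:R]) :
  bijective (Rsucc Root rep).
Proof.
apply: injF_bij => s t e.
have par_cycle U cU nU := (hpar U cU nU).1.
have step_eq := Rstep_Rsucc hn par_cycle hdepthS hrep e.
by move: e; rewrite !RsuccE step_eq; apply: (icr_inj hn).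
Qed.
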